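(* Let $P=\{\bm{x}_1,\dots,\bm{x}_N\}$ be a population of $N$ solutions and let $\pi:\{1,\dots,N\}\to\{1,\dots,N\}$ be a bijection satisfying $\forall i\neq j:\ \bm{x}_i\succ_{\mathrm{c}}\bm{x}_j \Rightarrow \pi(i)<\pi(j)$. Consider one application of stochastic tournament selection to $P$ (with the winner being the picked solution of smallest $\pi$-value). Then: (i) every solution $\bm{x}_i\in P$ is selected with probability at least $1/N^2$; (ii) for every constant $c\ge 1$ there is a constant $\delta>0$ (independent of $N$) such that every $\bm{x}_i\in P$ with $\pi(i)\le c$ is selected with probability at least $\delta$.
   Context: Crowded comparison: each solution $\bm{x}$ of a population has a rank $\mathrm{rank}(\bm{x})$ (index of its non-dominated front) and a crowding distance $\mathrm{dist}(\bm{x})$; $\bm{x}\succ_{\mathrm{c}}\bm{y}$ means $\mathrm{rank}(\bm{x})<\mathrm{rank}(\bm{y})$, or $\mathrm{rank}(\bm{x})=\mathrm{rank}(\bm{y})$ and $\mathrm{dist}(\bm{x})>\mathrm{dist}(\bm{y})$. Stochastic tournament selection on a population $P$ of size $N$: choose $k$ uniformly at random from $\{1,2,\dots,N\}$, then pick $k$ solutions from $P$ independently and uniformly at random with replacement, and output the picked solution that is best, i.e. the one with smallest $\pi$-value, where $\pi$ is a bijection as in the claim (solutions with identical rank and crowding distance receive their relative $\pi$-order uniformly at random). *)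

(* with extended reals (crowding distance may be +oo). *)
From HB Require Import structures.
From mathcomp Require Import all_boot all_order all_algebra all_fingroup.
From mathcomp Require Import reals constructive_ereal.
Set Implicit Arguments. Unset Strict Implicit. Unset Printing Implicit Defensive.
Import Order.TTheory GRing.Theory Num.Theory.
Local Open Scope ring_scope.

(* Population P = {x_1,...,x_N} indexed by 'I_N; each solution has a rank
   (index of its non-dominated front) and a crowding distance in \bar R. *)

Definition crowded_better (R : realType) (N : nat)
  (rank : 'I_N -> nat) (dist : 'I_N -> \bar R) (i j : 'I_N) : Prop :=
  (rank i < rank j)%N \/ (rank i = rank j /\ (dist j < dist i)%E).

Definition pi_compatible (R : realType) (N : nat)
  (rank : 'I_N -> nat) (dist : 'I_N -> \bar R) (pi : {perm 'I_N}) : Prop :=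
  forall i j : 'I_N, i != j -> crowded_better rank dist i j -> (pi i < pi j)%N.

Definition tour_winner (N k : nat) (pi : {perm 'I_N})
  (t : {ffun 'I_k -> 'I_N}) (i : 'I_N) : bool :=
  (i \in codom t) && [forall j : 'I_k, (pi i <= pi (t j))%N].

(* probability that a k-tournament (k picks uniformly with replacement)
   outputs solution i *)
Definition tour_prob (R : realType) (N k : nat) (pi : {perm 'I_N}) (i : 'I_N) : R :=
  (#|[set t : {ffun 'I_k -> 'I_N} | tour_winner pi t i]|)%:R / (N ^ k)%:R.

(* stochastic tournament selection: k uniform in {1,...,N} *)
Definition sel_prob (R : realType) (N : nat) (pi : {perm 'I_N}) (i : 'I_N) : R :=
  (N%:R)^-1 * \sum_(k < N) tour_prob R k.+1 pi i.

From HB Require Import structures.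
From mathcomp Require Import all_boot all_order all_algebra all_fingroup.
From mathcomp Require Import reals constructive_ereal.
From mathcomp Require Import zify ring lra.
Import Order.TTheory GRing.Theory Num.Theory.
Local Open Scope ring_scope.

(* With q = pi(i) + 1, a k-tournament returns x_i whenever x_i is picked exactly
   once and every other pick is one of the N - q solutions ranked after it;
   choosing the position of that pick gives probability at least
   k (N - q)^(k-1) / N^k.  For k = 1 this is 1/N, which yields (i).  For
   k - 1 <= N/(2q), Bernoulli's inequality bounds it by k/(2N), and summing over
   these roughly N/(2q) values of k and dividing by N gives 1/(16 q^2) <= 1/(16 c^2). *)

Section PickOnce.
Variables (T : finType) (k : nat).
Implicit Types (U : {set T}) (i : T) (j : 'I_k).

Definition pick_once U i j : {set {ffun 'I_k -> T}} :=
  [set t : {ffun 'I_k -> T} | (t j == i) && [forall l, (l != j) ==> (t l \in U)]].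

Lemma card_pick_once U i j : #|pick_once U i j| = (#|U| ^ k.-1)%N.
Proof.
pose F l := if l == j then [set i] else U.
have -> : #|pick_once U i j| = #|family F|.
  apply: eq_card => t; rewrite inE; apply/andP/familyP => [[/eqP tj /forallP tU] l|tF].
    by rewrite /F; case: eqVneq => [->|lj]; [rewrite inE tj | exact: implyP (tU l) lj].
  split; first by have := tF j; rewrite /F eqxx inE.
  by apply/forallP => l; apply/implyP => /negbTE lj; have := tF l; rewrite /F lj.
rewrite card_family foldrE big_image /= (bigD1 j) //= /F eqxx cards1 mul1n.
rewrite (eq_bigr (fun => #|U|)) => [|l /negbTE -> //].
by rewrite prod_nat_const cardC1 card_ord.
Qed.

Lemma card_bigcup_pick_once U i : i \notin U ->
  #|\bigcup_j pick_once U i j| = (k * #|U| ^ k.-1)%N.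
Proof.
move=> iNU; rewrite -sum1_card partition_disjoint_bigcup => [|j j' jj'].
  under eq_bigr do rewrite sum1_card card_pick_once.
  by rewrite sum_nat_const card_ord.
rewrite -setI_eq0; apply/eqP/setP => t; rewrite !inE.
apply/negP => /andP[/andP[/eqP tj _] /andP[_ /forallP tU]].
by have := tU j; rewrite jj' tj (negbTE iNU).
Qed.

End PickOnce.

Arguments pick_once {T k}.

Lemma card_ord_gt N (a : nat) : #|[set y : 'I_N | (a < y)%N]| = (N - a.+1)%N.
Proof.
rewrite -sum1_card big_mkcond /=.
under eq_bigr do rewrite inE.
elim: N => [|N IH]; first by rewrite big_ord0.
by rewrite big_ord_recr /= IH; case: ltnP => /=; lia.
Qed.

Section Tournament.
Variables (N : nat) (pi : {perm 'I_N}) (i : 'I_N).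

Definition ranked_after : {set 'I_N} := [set x | (pi i < pi x)%N].

Lemma card_ranked_after : #|ranked_after| = (N - (pi i).+1)%N.
Proof.
have -> : ranked_after = pi @^-1: [set y : 'I_N | (pi i < y)%N].
  by apply/setP => x; rewrite !inE.
by rewrite card_preimset ?card_ord_gt //; exact: perm_inj.
Qed.

Lemma pick_once_tour_winner k (j : 'I_k) (t : {ffun 'I_k -> 'I_N}) :
  t \in pick_once ranked_after i j -> tour_winner pi t i.
Proof.
rewrite inE => /andP[/eqP tj /forallP tU].
rewrite /tour_winner -tj codom_f; apply/forallP => l.
have [->|lj] := eqVneq l j; first by [].
by have := tU l; rewrite lj inE tj => /ltnW.
Qed.

Lemma card_tour_winner_ge k :
  (k * (N - (pi i).+1) ^ k.-1 <=
    #|[set t : {ffun 'I_k -> 'I_N} | tour_winner pi t i]|)%N.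
Proof.
have iNU : i \notin ranked_after by rewrite inE ltnn.
rewrite -card_ranked_after -(@card_bigcup_pick_once _ k _ _ iNU); apply: subset_leq_card.
apply/subsetP => t /bigcupP[j _ tj]; rewrite inE.
exact: pick_once_tour_winner tj.
Qed.

End Tournament.

Lemma bernoulli_ineq {R : realDomainType} n {x : R} : x <= 1 -> 1 - n%:R * x <= (1 - x) ^+ n.
Proof.
move=> x_le1; elim: n => [|n IH]; first by rewrite mul0r subr0 expr0.
have x1_ge0 : 0 <= 1 - x by rewrite subr_ge0.
have := ler_wpM2l x1_ge0 IH; have : 0 <= n%:R * (x * x) by rewrite mulr_ge0 // -expr2 sqr_ge0.
by rewrite exprS -natr1; nra.
Qed.

Lemma sum_succ_ge_half_sq (R : numFieldType) n :
  (n ^ 2)%:R / 2 <= \sum_(K < n) K.+1%:R :> R.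
Proof.
have : (n ^ 2 <= (\sum_(K < n) K.+1) * 2)%N.
  elim: n => [|n IH]; first by rewrite big_ord0.
  by rewrite big_ord_recr -!mulnn /= in IH *; lia.
by rewrite -(ler_nat R) natrM natr_sum -ler_pdivrMr.
Qed.

Section SelectionProbability.
Variables (R : realType) (N : nat) (pi : {perm 'I_N}) (i : 'I_N).
Local Notation q := (pi i).+1.

Lemma tour_prob_ge0 k : 0 <= tour_prob R k pi i.
Proof. by rewrite divr_ge0. Qed.

Lemma tour_prob_ge k : (k * (N - q) ^ k.-1)%:R / (N ^ k)%:R <= tour_prob R k pi i.
Proof. by rewrite ler_wpM2r ?invr_ge0 // ler_nat card_tour_winner_ge. Qed.

Lemma tour_prob_ge_half K :
  (K * (2 * q) <= N)%N -> K.+1%:R / (2 * N%:R) <= tour_prob R K.+1 pi i.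
Proof.
move=> KqN; apply: le_trans (tour_prob_ge K.+1).
have qN : (q <= N)%N by exact: ltn_ord.
have N_gt0 : 0 < N%:R :> R by rewrite ltr0n; apply: leq_trans qN.
pose x : R := q%:R / N%:R.
have -> : (K.+1 * (N - q) ^ K.+1.-1)%:R / (N ^ K.+1)%:R = K.+1%:R / N%:R * (1 - x) ^+ K :> R.
  have -> : 1 - x = (N%:R - q%:R) / N%:R by rewrite /x; field; rewrite gt_eqF.
  rewrite natrM !natrX natrB //= exprS expr_div_n.
  by field; rewrite expf_neq0 gt_eqF.
have half_le : 1 / 2 <= (1 - x) ^+ K.
  have Kx_le : K%:R * x <= 1 / 2.
    rewrite /x mulrA ler_pdivrMr // -natrM.
    have : (2 * (K * q) <= N)%N by lia.
    by rewrite -(ler_nat R) natrM; lra.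
  have x_le1 : x <= 1 by rewrite /x ler_pdivrMr // mul1r ler_nat.
  have := bernoulli_ineq K x_le1; lra.
have -> : K.+1%:R / (2 * N%:R) = K.+1%:R / N%:R * (1 / 2) :> R.
  by field; rewrite gt_eqF.
by rewrite ler_wpM2l // divr_ge0 // ltW.
Qed.

Lemma sel_prob_ge_inv_sq : (N ^ 2)%:R^-1 <= sel_prob R pi i.
Proof.
have N_gt0 : (0 < N)%N by apply: leq_ltn_trans (ltn_ord i).
rewrite /sel_prob natrX -exprVn expr2 ler_wpM2l ?invr_ge0 //.
rewrite (bigD1 (Ordinal N_gt0)) //=.
have := tour_prob_ge 1; rewrite mul1n expn0 expn1 div1r => /le_trans; apply.
by rewrite lerDl sumr_ge0 // => k _; exact: tour_prob_ge0.
Qed.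

Lemma sel_prob_ge_rank : ((16 * q ^ 2)%:R)^-1 <= sel_prob R pi i.
Proof.
pose L := (N %/ (2 * q))%N.
have L_mul_le : (L * (2 * q) <= N)%N by exact: leq_divM.
have N_lt : (N < L.+1 * (2 * q))%N by exact: ltn_ceil.
have N_pos : (0 < N)%N by apply: leq_ltn_trans (ltn_ord i).
have L_lt : (L < N)%N by nia.
have N_gt0 : 0 < N%:R :> R by rewrite ltr0n.
have sum_ge : (\sum_(K < L.+1) K.+1%:R) / (2 * N%:R) <= \sum_(K < N) tour_prob R K.+1 pi i.
  rewrite mulr_suml (big_ord_widen N (fun K => K.+1%:R / (2 * N%:R))) // big_mkcond /=.
  apply: ler_sum => K _; case: ifP => K_lt; last exact: tour_prob_ge0.
  by apply: tour_prob_ge_half; apply: leq_trans L_mul_le; rewrite leq_mul2r -ltnS K_lt orbT.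
have sel_ge : N%:R^-1 * ((L.+1 ^ 2)%:R / 2 / (2 * N%:R)) <= sel_prob R pi i.
  rewrite /sel_prob ler_wpM2l ?invr_ge0 //; apply: le_trans sum_ge.
  by rewrite ler_wpM2r ?invr_ge0 ?sum_succ_ge_half_sq // mulr_ge0.
apply: le_trans sel_ge.
have -> : N%:R^-1 * ((L.+1 ^ 2)%:R / 2 / (2 * N%:R)) = (L.+1 ^ 2)%:R / (4 * N ^ 2)%:R :> R.
  by rewrite natrM natrX; field; rewrite gt_eqF.
rewrite ler_pdivlMr ?ltr0n ?muln_gt0 ?expn_gt0 ?N_pos // mulrC.
rewrite ler_pdivrMr ?ltr0n // -natrM ler_nat.
nia.
Qed.

End SelectionProbability.

Theorem lemma1 (R : realType) :
  (forall (N : nat) (rank : 'I_N -> nat) (dist : 'I_N -> \bar R)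
          (pi : {perm 'I_N}),
      pi_compatible rank dist pi ->
      forall i : 'I_N, (N ^ 2)%:R^-1 <= sel_prob R pi i)
  /\
  (forall c : R, 1 <= c ->
     exists delta : R, 0 < delta /\
       forall (N : nat) (rank : 'I_N -> nat) (dist : 'I_N -> \bar R)
              (pi : {perm 'I_N}),
         pi_compatible rank dist pi ->
         forall i : 'I_N, ((pi i).+1)%:R <= c -> delta <= sel_prob R pi i).
Proof.
split=> [N rank dist pi _ i | c c_ge1]; first exact: sel_prob_ge_inv_sq.
exists (16 * c ^+ 2)^-1; split=> [|N rank dist pi _ i q_le_c].
  by rewrite invr_gt0; nra.
apply: le_trans (sel_prob_ge_rank _ _ pi i).
rewrite lef_pV2 ?posrE ?ltr0n ?muln_gt0 ?expn_gt0 //; last by nra.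
by rewrite natrM natrX ler_wpM2l // lerXn2r ?nnegrE ?ler0n //; lra.
Qed.
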